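(* Let $G=(V,E)$ be a finite graph with boundary $B\subseteq V$, $|B|\ge2$, such that $B$ is an independent set of $G$. Let $d_1\le d_2\le\cdots\le d_{|B|}$ be the degrees (in $G$) of the boundary vertices, sorted in non-decreasing order. Then $$\sigma_k(G,B)\le d_k,\qquad k=1,2,\ldots,|B|.$$
   Context: $G=(V,E)$ is a finite undirected graph. A boundary is a subset $B\subseteq V$ with $|B|\ge2$. For $f:V\to\mathbb{R}$, $f\neq0$, the Rayleigh quotient is $R(f)=\frac{\sum_{\{x,y\}\in E}(f(x)-f(y))^2}{\sum_{x\in B}f(x)^2}$, interpreted as $+\infty$ if $f$ vanishes on $B$. For $1\le k\le|B|$, the $k$-th Steklov eigenvalue is $\sigma_k(G,B)=\min_{W\subseteq\mathbb{R}^V,\dim W=k}\max_{0\ne f\in W}R(f)$. *)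

From HB Require Import structures.
From mathcomp Require Import all_boot all_order all_algebra.
From mathcomp Require Import boolp classical_sets reals constructive_ereal ereal.
Set Implicit Arguments. Unset Strict Implicit. Unset Printing Implicit Defensive.
Import Order.TTheory GRing.Theory Num.Theory.
Local Open Scope ring_scope.
Local Open Scope classical_set_scope.

(* A finite (simple, undirected) graph: vertex set T (a finType), adjacency
   relation [e] assumed symmetric and irreflexive in the theorem. *)

Section Steklov.
Variables (R : realType) (T : finType) (e : rel T).

(* sum over unordered edges {x,y} (each edge counted once, using the
   enumeration rank of T to order the endpoints) of (f x - f y)^2 *)
Definition dirichlet (f : {ffun T -> R^o}) : R :=
  \sum_(x : T) \sum_(y : T | (enum_rank x < enum_rank y)%N && e x y)
     (f x - f y) ^+ 2.

Definition bnorm (B : {set T}) (f : {ffun T -> R^o}) : R :=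
  \sum_(x in B) f x ^+ 2.

Definition rayleigh (B : {set T}) (f : {ffun T -> R^o}) : \bar R :=
  if [forall x in B, f x == 0] then +oo%E
  else ((dirichlet f) / (bnorm B f))%:E.

Definition steklov (B : {set T}) (k : nat) : \bar R :=
  ereal_inf [set ereal_sup [set rayleigh B f | f in [set f | (f \in W) /\ f != 0]]
            | W in [set W : {vspace {ffun T -> R^o}} | \dim W = k]].

Definition deg (x : T) : nat := #|[set y | e x y]|.

(* degrees of boundary vertices, sorted non-decreasingly;
   d_k (1-indexed) is  nth 0 (sorted_bdegrees B) k.-1 *)
Definition sorted_bdegrees (B : {set T}) : seq nat :=
  sort leq [seq deg x | x in B].

End Steklov.

From HB Require Import structures.
From mathcomp Require Import all_boot all_order all_algebra.
From mathcomp Require Import boolp classical_sets reals constructive_ereal ereal.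
Set Implicit Arguments. Unset Strict Implicit. Unset Printing Implicit Defensive.
Import Order.TTheory GRing.Theory Num.Theory.
Local Open Scope ring_scope.

(* Take k boundary vertices of smallest degree, so all their degrees are at
   most d_k, and let W be the k-dimensional span of their indicator functions.
   As B is independent, every f in W vanishes at an endpoint of each edge, so
   its Dirichlet energy is sum_x deg x * f(x)^2 <= d_k * sum_B f^2.  Hence all
   nonzero f in W have Rayleigh quotient at most d_k, and min-max concludes. *)

Lemma exists_subseq_le_sorted_nth (T : finType) (F : T -> nat) (B : {set T})
    (k : nat) :
  (0 < k)%N -> (k <= #|B|)%N ->
  exists s : seq T, [/\ uniq s, size s = k, {subset s <= B} &
    forall x, x \in s -> (F x <= nth 0%N (sort leq [seq F x | x in B]) k.-1)%N].
Proof.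
move=> k_gt0 leq_kB.
set sB := sort (relpre F leq) (enum B).
have size_sB : size sB = #|B| by rewrite size_sort cardE.
have lt_size_sB j : (j < k)%N -> (j < size sB)%N.
  by move=> ltjk; rewrite size_sB (leq_trans ltjk).
have size_take_sB : size (take k sB) = k by rewrite size_takel ?size_sB.
exists (take k sB); split => [||x|x x_in].
- by rewrite take_uniq // sort_uniq enum_uniq.
- exact: size_take_sB.
- by move/mem_take; rewrite mem_sort mem_enum.
have lt_ik : (index x (take k sB) < k)%N by rewrite -{2}size_take_sB index_mem.
have {1}-> : x = nth x sB (index x (take k sB)).
  by rewrite -(nth_take _ lt_ik) nth_index.
rewrite -(nth_map x 0%N) ?lt_size_sB // -sort_map.
apply: (sorted_leq_nth leq_trans leqnn);
  rewrite ?inE ?size_sort ?size_map -?cardE -?size_sB.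
- by apply: sort_sorted; exact: leq_total.
- exact: lt_size_sB.
- by rewrite lt_size_sB ?prednK.
- by rewrite -ltnS prednK.
Qed.

Section Indicators.
Variables (R : fieldType) (T : finType).

Definition indicator (x : T) : {ffun T -> R^o} := [ffun y => (y == x)%:R].

Lemma span_indicators_notin (s : seq T) (f : {ffun T -> R^o}) (y : T) :
  f \in <<map indicator s>>%VS -> y \notin s -> f y = 0.
Proof.
move=> f_span y_notin_s.
rewrite (@coord_span _ _ _ (in_tuple _) _ f_span) sum_ffunE big1 // => i _.
have /mapP[x x_in_s ->] : (in_tuple (map indicator s))`_i \in map indicator s.
  by rewrite mem_nth.
rewrite ffunE /= ffunE; case: eqP => [eq_yx|_]; last by rewrite scaler0.
by move: y_notin_s; rewrite eq_yx x_in_s.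
Qed.

Lemma free_indicators (s : seq T) : uniq s -> free (map indicator s).
Proof.
elim: s => [|x s IHs] /=; first by rewrite /free span_nil dimv0.
move=> /andP[x_notin_s uniq_s]; rewrite free_cons IHs // andbT.
apply/negP => /span_indicators_notin /(_ x_notin_s).
by rewrite ffunE eqxx; apply/eqP; rewrite oner_eq0.
Qed.

Lemma dim_span_indicators (s : seq T) :
  uniq s -> \dim <<map indicator s>> = size s.
Proof. by move/free_indicators/eqP->; rewrite size_map. Qed.

End Indicators.

Section Graph.
Variables (R : realType) (T : finType) (e : rel T).
Hypotheses (e_sym : symmetric e) (e_irr : irreflexive e).

Lemma deg_card (x : T) : deg e x = #|[pred y | e x y]|.
Proof. by apply: eq_card => y; apply/idP/idP; rewrite in_setE. Qed.

Lemma sum_edges_endpoints (g : T -> R) :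
  \sum_x \sum_(y | (enum_rank x < enum_rank y)%N && e x y) (g x + g y)
  = \sum_x (deg e x)%:R * g x.
Proof.
pose below x y := (enum_rank x < enum_rank y)%N && e x y.
transitivity (\sum_x \sum_y
  ((if below x y then g x else 0) + (if below y x then g x else 0))).
  rewrite !(eq_bigr _ (fun x _ => big_split _ _ _ _ _)) !big_split /=.
  congr (_ + _); first by apply: eq_bigr => x _; rewrite big_mkcond.
  by rewrite exchange_big; apply: eq_bigr => x _; rewrite big_mkcond.
apply: eq_bigr => x _.
rewrite deg_card -sum1_card natr_sum mulr_suml [RHS]big_mkcond.
apply: eq_bigr => y _; rewrite /below (e_sym y x) inE mul1r.
case: (boolP (e x y)) => [exy|_]; last by rewrite !andbF addr0.
rewrite !andbT; case: ltngtP => [||/ord_inj/enum_rank_inj eq_xy];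
  rewrite ?addr0 ?add0r //.
by move: exy; rewrite eq_xy e_irr.
Qed.

Lemma dirichlet_orthogonal_edges (f : {ffun T -> R^o}) :
  (forall x y, e x y -> f x * f y = 0) ->
  dirichlet e f = \sum_x (deg e x)%:R * f x ^+ 2.
Proof.
move=> f_orth; rewrite /dirichlet -sum_edges_endpoints.
apply: eq_bigr => x _; apply: eq_bigr => y /andP[_ exy].
by rewrite sqrrB f_orth // mul0rn subr0.
Qed.

Lemma bnorm_gt0 (B : {set T}) (f : {ffun T -> R^o}) :
  ~~ [forall x in B, f x == 0] -> 0 < bnorm B f.
Proof.
move=> /forall_inPn[x xB /negPf fx_neq0]; rewrite /bnorm (bigD1 x) //=.
apply: (@lt_le_trans _ _ (f x ^+ 2)); first by rewrite exprn_even_gt0 ?fx_neq0.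
by rewrite lerDl sumr_ge0 // => y _; exact: sqr_ge0.
Qed.

Lemma rayleigh_le (B : {set T}) (f : {ffun T -> R^o}) (c : R) :
  ~~ [forall x in B, f x == 0] -> dirichlet e f <= c * bnorm B f ->
  (rayleigh e B f <= c%:E)%E.
Proof.
move=> f_neq0_on_B le_dir.
by rewrite /rayleigh (negPf f_neq0_on_B) lee_fin ler_pdivrMr ?bnorm_gt0.
Qed.

Lemma rayleigh_le_supported (B : {set T}) (s : seq T) (d : nat)
    (f : {ffun T -> R^o}) :
  (forall x y, x \in B -> y \in B -> ~~ e x y) ->
  {subset s <= B} -> (forall x, x \in s -> (deg e x <= d)%N) ->
  (forall y, y \notin s -> f y = 0) -> f != 0 ->
  (rayleigh e B f <= d%:R%:E)%E.
Proof.
move=> B_indep sB deg_le f_supp f_neq0.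
have f_orth x y : e x y -> f x * f y = 0.
  move=> exy; case: (boolP (x \in s)) => [xs|/f_supp->]; last by rewrite mul0r.
  case: (boolP (y \in s)) => [ys|/f_supp->]; last by rewrite mulr0.
  by move: (B_indep _ _ (sB _ xs) (sB _ ys)); rewrite exy.
apply: rayleigh_le.
  apply: contra f_neq0 => /forall_inP f0; apply/eqP/ffunP => x; rewrite ffunE.
  by case: (boolP (x \in s)) => [/sB/f0/eqP|/f_supp].
rewrite dirichlet_orthogonal_edges // /bnorm mulr_sumr [leRHS]big_mkcond /=.
apply: ler_sum => x _; case: (boolP (x \in s)) => [xs|/f_supp->].
  by rewrite sB // ler_wpM2r ?sqr_ge0 // ler_nat deg_le.
by rewrite expr0n mulr0; case: ifP.
Qed.

Lemma steklov_le (B : {set T}) (k : nat) (W : {vspace {ffun T -> R^o}})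
    (c : \bar R) :
  \dim W = k -> (forall f, f \in W -> f != 0 -> (rayleigh e B f <= c)%E) ->
  (steklov R e B k <= c)%E.
Proof.
move=> dimW rayleigh_W; apply: le_trans (ereal_inf_lbound _) _; first by exists W.
by apply: ge_ereal_sup => _ [f [fW f_neq0] <-]; exact: rayleigh_W.
Qed.

End Graph.

Theorem mainTheorem5 (R : realType) (T : finType) (e : rel T)
  (e_sym : symmetric e) (e_irr : irreflexive e)
  (B : {set T}) (hB : (2 <= #|B|)%N)
  (B_indep : forall x y, x \in B -> y \in B -> ~~ e x y)
  (k : nat) (hk1 : (1 <= k)%N) (hkB : (k <= #|B|)%N) :
  (steklov R e B k <= (nth 0%N (sorted_bdegrees e B) k.-1)%:R%:E)%E.
Proof.
have [s [uniq_s size_s sB deg_le]] := exists_subseq_le_sorted_nth (deg e) hk1 hkB.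
apply: (steklov_le (W := <<map (@indicator R T) s>>%VS)).
  by rewrite dim_span_indicators.
move=> f fW f_neq0.
apply: (rayleigh_le_supported e_sym e_irr B_indep sB deg_le) => // y.
exact: span_indicators_notin.
Qed.
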